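(* Consider an $L$-layer ADMM-CSNet with initial weights $(W_{10}^l)_{i,j}\sim\mathcal N(0,1)$, $(W_{20}^l)_{i,j}\sim\mathcal N(0,1)$ i.i.d., $l\in[L]$, and suppose $\|W_{20}^l\|\le c_{20}\sqrt m$ for all $l$ with $c_{20}=3$. Then for any $\mathbf W_1,\mathbf W_2$ with $\|\mathbf W_1-\mathbf W_{10}\|\le R_1$, $\|\mathbf W_2-\mathbf W_{20}\|\le R_2$ and any $s\in[m]$, $$\|\mathbf b_s^l\|\le L_\sigma^{L-l}\big(2(c_{20}+R_2/\sqrt m)+1\big)^{L-l},\quad l\in[L],$$ and at initialization ($R_2=0$), $\|\mathbf b^l_{s,0}\|\le L_\sigma^{L-l}(2c_{20}+1)^{L-l}$.
   Context: Fix $\lambda>0$ and $\sigma(x)=\log(1+e^{x-\lambda})-\log(1+e^{-x-\lambda})$ (componentwise), $|\sigma'|\le L_\sigma$. ADMM-CSNet: input $\mathbf y\in\mathbb R^n$, initial $\mathbf z^0,\mathbf u^0\in\mathbb R^m$; $\mathbf x^l=\frac1{\sqrt n}W_1^l\mathbf y+\frac1{\sqrt m}W_2^l(\mathbf z^{l-1}-\mathbf u^{l-1})$, $\mathbf z^l=\sigma(\mathbf x^l+\mathbf u^{l-1})$, $\mathbf u^l=\mathbf u^{l-1}+\mathbf x^l-\mathbf z^l$, output $\mathbf f=\frac1{\sqrt m}\mathbf z^L$, $f_s$ its $s$-th entry. $\mathbf b_s^l=\partial f_s/\partial\mathbf z^l$ (total derivative through the recursion), $\mathbf b^l_{s,0}$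 the same at the initial weights. $\mathbf W_1=(W_1^l)_l$, $\mathbf W_2=(W_2^l)_l$; weight distances are Frobenius norms over all entries. $\|\cdot\|$ is the Euclidean norm for vectors, spectral norm for matrices. *)

From HB Require Import structures.
From mathcomp Require Import all_boot all_order all_algebra.
From mathcomp Require Import all_classical all_reals all_analysis.
Set Implicit Arguments. Unset Strict Implicit. Unset Printing Implicit Defensive.
Import Order.TTheory GRing.Theory Num.Theory.
Import numFieldNormedType.Exports.
Local Open Scope classical_set_scope.
Local Open Scope ring_scope.

Section ADMM.
Variable R : realType.

Definition frob (p q : nat) (A : 'M[R]_(p, q)) : R :=
  Num.sqrt (\sum_(i < p) \sum_(j < q) (A i j) ^+ 2).

Definition enorm (p : nat) (v : 'cV[R]_p) : R := frob v.

Definition specnorm (p q : nat) (A : 'M[R]_(p, q)) : R :=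
  sup [set enorm (A *m v) | v in [set v : 'cV[R]_q | enorm v <= 1]].

Definition wdist (p q L : nat) (W W0 : nat -> 'M[R]_(p, q)) : R :=
  Num.sqrt (\sum_(1 <= l < L.+1) \sum_(i < p) \sum_(j < q)
              ((W l - W0 l) i j) ^+ 2).

Definition sigma (lam x : R) : R :=
  ln (1 + expR (x - lam)) - ln (1 + expR (- x - lam)).

Definition sigmav (m : nat) (lam : R) (v : 'cV[R]_m) : 'cV[R]_m :=
  map_mx (sigma lam) v.

Definition xlayer (n m : nat) (W1 : 'M[R]_(m, n)) (W2 : 'M[R]_m)
  (y : 'cV[R]_n) (z u : 'cV[R]_m) : 'cV[R]_m :=
  (Num.sqrt n%:R)^-1 *: (W1 *m y) + (Num.sqrt m%:R)^-1 *: (W2 *m (z - u)).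

(* one ADMM-CSNet layer: (z^{l-1}, u^{l-1}) |-> (z^l, u^l) *)
Definition layer (n m : nat) (W1 : 'M[R]_(m, n)) (W2 : 'M[R]_m)
  (y : 'cV[R]_n) (lam : R) (zu : 'cV[R]_m * 'cV[R]_m) : 'cV[R]_m * 'cV[R]_m :=
  let x := xlayer W1 W2 y zu.1 zu.2 in
  let z' := sigmav lam (x + zu.2) in
  (z', zu.2 + x - z').

(* run_from l k st: starting from state (z^l, u^l), apply layers l+1, ..., l+k *)
Fixpoint run_from (n m : nat) (W1 : nat -> 'M[R]_(m, n)) (W2 : nat -> 'M[R]_m)
  (y : 'cV[R]_n) (lam : R) (l k : nat) (zu : 'cV[R]_m * 'cV[R]_m)
  : 'cV[R]_m * 'cV[R]_m :=
  match k with
  | 0 => zu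
  | k'.+1 => run_from W1 W2 y lam l.+1 k' (layer (W1 l.+1) (W2 l.+1) y lam zu)
  end.

Definition state (n m : nat) (W1 : nat -> 'M[R]_(m, n)) (W2 : nat -> 'M[R]_m)
  (y : 'cV[R]_n) (lam : R) (z0 u0 : 'cV[R]_m) (l : nat) :=
  run_from W1 W2 y lam 0 l (z0, u0).

(* f_s as a function of the node z^l of the computation graph (1 <= l <= L):
   z^l is replaced by zeta, and everything downstream is recomputed,
   i.e. u^l = u^{l-1} + x^l - zeta, then layers l+1..L, then f = z^L / sqrt m. *)
Definition f_from_z (n m L : nat) (W1 : nat -> 'M[R]_(m, n)) (W2 : nat -> 'M[R]_m)
  (y : 'cV[R]_n) (lam : R) (z0 u0 : 'cV[R]_m) (s : 'I_m) (l : nat)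
  (zeta : 'cV[R]_m) : R :=
  let prev := state W1 W2 y lam z0 u0 l.-1 in
  let x := xlayer (W1 l) (W2 l) y prev.1 prev.2 in
  let ul := prev.2 + x - zeta in
  ((Num.sqrt m%:R)^-1 *: (run_from W1 W2 y lam l (L - l) (zeta, ul)).1) s ord0.

(* b_s^l = d f_s / d z^l : the vector of partial derivatives at the actual z^l *)
Definition bvec (n m L : nat) (W1 : nat -> 'M[R]_(m, n)) (W2 : nat -> 'M[R]_m)
  (y : 'cV[R]_n) (lam : R) (z0 u0 : 'cV[R]_m) (s : 'I_m) (l : nat) : 'cV[R]_m :=
  \col_(j < m) 'D_(delta_mx j ord0 : 'cV[R]_m)
      (f_from_z L W1 W2 y lam z0 u0 s l) (state W1 W2 y lam z0 u0 l).1.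

End ADMM.

From HB Require Import structures.
From mathcomp Require Import all_boot all_order all_algebra.
From mathcomp Require Import all_classical all_reals all_analysis.
From mathcomp Require Import ring lra zify.
Import Order.TTheory GRing.Theory Num.Theory.
Import numFieldNormedType.Exports.
Set Implicit Arguments.
Unset Strict Implicit.
Unset Printing Implicit Defensive.

Local Open Scope classical_set_scope.
Local Open Scope ring_scope.

(* The output f_s, viewed as a function of the node z^l, is Lipschitz.  For
   lam > 0 we have 0 <= sigma' <= 1, so both sigma and id - sigma are
   1-Lipschitz; hence, for the distance max(|dz|, |du|) on states, a layer
   with |W_2 v| <= c sqrt m |v| is (2 c + 1)-Lipschitz, and f_s is
   (2 c + 1)^(L - l) / sqrt m-Lipschitz in z^l.  A Lipschitz constant bounds
   the gradient b_s^l.  Within Frobenius distance R_2 of W_20 one may take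
   c = 3 + R_2 / sqrt m, since ||W_2|| <= ||W_20|| + ||W_2 - W_20||_F.
   Finally sigma'(x) -> 1 as x -> +oo forces L_sigma >= 1, so the factor
   L_sigma^(L - l) is free. *)

Section Activation.
Variables (R : realType) (lam : R).

Lemma is_derive_ln1p_expR_affine (c x : R) :
  is_derive x 1 (fun t : R => ln (1 + expR (c * t - lam)))
    ((1 + expR (c * x - lam))^-1 * (expR (c * x - lam) * c)).
Proof.
have d_affine : is_derive x 1 (fun t : R => c * t - lam) c.
  by apply: is_derive_eq; rewrite subr0 /GRing.scale /= mulr1.
have d_exp : is_derive x 1 (cst 1 + expR \o (fun t : R => c * t - lam))
    (expR (c * x - lam) * c).
  by apply: is_derive_eq; rewrite add0r.
apply: (is_derive1_comp _ d_exp); apply: is_derive1_ln.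
by rewrite /= ltr_wpDr // expR_ge0.
Qed.

Lemma is_derive_sigma (x : R) :
  is_derive x 1 (sigma lam)
    (expR (x - lam) / (1 + expR (x - lam)) +
     expR (- x - lam) / (1 + expR (- x - lam))).
Proof.
have -> : sigma lam = (fun t : R => ln (1 + expR (1 * t - lam))) -
    (fun t : R => ln (1 + expR (-1 * t - lam))).
  by apply/funext => t; rewrite /sigma /= !fctE mul1r mulN1r.
have := is_deriveB (is_derive_ln1p_expR_affine 1 x) (is_derive_ln1p_expR_affine (-1) x).
by rewrite mul1r mulN1r mulr1 mulrN1 mulrN opprK ![_^-1 * _]mulrC.
Qed.

Lemma differentiable_sigma (x : R) : differentiable (sigma lam) x.
Proof. by apply/derivable1_diffP; case: (is_derive_sigma x). Qed.

(* sigma' x >= E / (1 + E) at x = ln E + lam, and E / (1 + E) > K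
   once E = 2 / (1 - K). *)
Lemma sigma_derive_bound_ge1 (K : R) :
  (forall x, `|derive1 (sigma lam) x| <= K) -> 1 <= K.
Proof.
move=> hK; have K0 : 0 <= K by apply: le_trans (hK 0).
rewrite leNgt; apply/negP => K_lt1.
pose E := 2 / (1 - K).
have E0 : 0 < E by rewrite divr_gt0 // subr_gt0.
have EK : E * (1 - K) = 2 by rewrite mulfVK // subr_eq0 gt_eqF.
have frac_le : E / (1 + E) <= K.
  apply: le_trans (le_trans (ler_norm _) (hK (ln E + lam))).
  rewrite derive1E; have [_ ->] := is_derive_sigma (ln E + lam).
  by rewrite addrK lnK ?posrE // lerDl divr_ge0 ?addr_ge0 ?expR_ge0.
move: frac_le; rewrite ler_pdivrMr ?addr_gt0 // => frac_le.
nra.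
Qed.

Lemma ler_sigma a b : a <= b -> sigma lam a <= sigma lam b.
Proof.
move=> ab; rewrite /sigma; apply: lerB.
  by rewrite ler_ln ?posrE ?addr_gt0 ?expR_gt0 // lerD2l ler_expR lerD2r.
by rewrite ler_ln ?posrE ?addr_gt0 ?expR_gt0 // lerD2l ler_expR lerD2r lerN2.
Qed.

Hypothesis lam_gt0 : 0 < lam.

(* With A = e^a, B = e^b, k = e^-lam, the claim is the inequality
   (1 + B k)(A + k) <= (1 + A k)(B + k), i.e. 0 <= (B - A)(1 - k^2). *)
Lemma sigma_increment_le a b : a <= b -> sigma lam b - sigma lam a <= b - a.
Proof.
move=> ab; rewrite /sigma.
set A := expR a; set B := expR b; set k := expR (- lam).
have A0 : 0 < A := expR_gt0 a.
have B0 : 0 < B := expR_gt0 b.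
have k0 : 0 < k := expR_gt0 _.
have k1 : k < 1 by rewrite expR_lt1 oppr_lt0.
have AB : A <= B by rewrite ler_expR.
have expR_sub_lam x : expR (x - lam) = expR x * k by rewrite expRD.
have expR_opp_sub_lam x : expR (- x - lam) = (expR x)^-1 * k by rewrite expRD expRN.
rewrite !expR_opp_sub_lam !expR_sub_lam -/A -/B.
have -> : b - a = ln B - ln A by rewrite !expRK.
have pos_1pk (x : R) : 0 < x -> 0 < 1 + x * k.
  by move=> x0; rewrite addr_gt0 ?mulr_gt0.
have P1 := pos_1pk _ B0; have P2 := pos_1pk _ A0.
have P3 : 0 < 1 + B^-1 * k by apply: pos_1pk; rewrite invr_gt0.
have P4 : 0 < 1 + A^-1 * k by apply: pos_1pk; rewrite invr_gt0.
suff : ln (1 + B * k) + ln (1 + A^-1 * k) + ln A <=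
       ln B + ln (1 + A * k) + ln (1 + B^-1 * k) by lra.
rewrite -!lnM ?posrE ?mulr_gt0 // ler_ln ?posrE ?mulr_gt0 //.
have -> : (1 + B * k) * (1 + A^-1 * k) * A = (1 + B * k) * (A + k).
  by field; rewrite gt_eqF.
have -> : B * (1 + A * k) * (1 + B^-1 * k) = (1 + A * k) * (B + k).
  by field; rewrite gt_eqF.
have : 0 <= (B - A) * (1 - k * k) by rewrite mulr_ge0 ?subr_ge0 // ?mulr_ile1 ?ltW.
nra.
Qed.

Lemma sigma_lipschitz a b : `|sigma lam a - sigma lam b| <= `|a - b|.
Proof.
wlog ba : a b / b <= a.
  by move=> hw; case: (leP b a) => [/hw //| /ltW /hw]; rewrite distrC [`|a - b|]distrC.
have le_inc := sigma_increment_le ba.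
have ge0_inc : 0 <= sigma lam a - sigma lam b by rewrite subr_ge0 ler_sigma.
by rewrite (ger0_norm ge0_inc) ger0_norm ?subr_ge0.
Qed.

Lemma subr_sigma_lipschitz a b :
  `|(a - b) - (sigma lam a - sigma lam b)| <= `|a - b|.
Proof.
wlog ba : a b / b <= a.
  move=> hw; case: (leP b a) => [/hw //| /ltW /hw].
  have -> : (b - a) - (sigma lam b - sigma lam a) =
      - ((a - b) - (sigma lam a - sigma lam b)) by ring.
  by rewrite normrN [`|b - a|]distrC.
have le_inc := sigma_increment_le ba.
have ge0_inc : 0 <= sigma lam a - sigma lam b by rewrite subr_ge0 ler_sigma.
by rewrite !ger0_norm ?subr_ge0 //; lra.
Qed.

End Activation.

Section EuclideanNorm.
Variable R : realType.

Lemma cauchy_schwarz_sum n (a b : 'I_n -> R) :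
  (\sum_i a i * b i) ^+ 2 <= (\sum_i a i ^+ 2) * (\sum_i b i ^+ 2).
Proof.
set Sa := \sum_i a i ^+ 2; set Sb := \sum_i b i ^+ 2; set Sab := \sum_i a i * b i.
have lagrange : \sum_i \sum_j (a i * b j - a j * b i) ^+ 2 = 2 * (Sa * Sb - Sab ^+ 2).
  have prod_ab : \sum_i \sum_j a i ^+ 2 * b j ^+ 2 = Sa * Sb.
    by rewrite mulr_suml; apply: eq_bigr => i _; rewrite mulr_sumr.
  have prod_ba : \sum_i \sum_j a j ^+ 2 * b i ^+ 2 = Sa * Sb.
    by rewrite exchange_big.
  have prod_mix : \sum_i \sum_j a i * b i * (a j * b j) = Sab ^+ 2.
    by rewrite expr2 mulr_suml; apply: eq_bigr => i _; rewrite mulr_sumr.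
  rewrite mulrBr -[2 * (Sa * Sb)]/(2%:R * _) mulr_natl mulr2n -{1}prod_ab -prod_ba.
  rewrite -prod_mix mulr_sumr -!big_split -sumrB; apply: eq_bigr => i _ /=.
  rewrite mulr_sumr -!big_split -sumrB; apply: eq_bigr => j _ /=.
  ring.
have : 0 <= \sum_i \sum_j (a i * b j - a j * b i) ^+ 2.
  by apply: sumr_ge0 => i _; apply: sumr_ge0 => j _; exact: sqr_ge0.
by rewrite lagrange pmulr_rge0 // subr_ge0.
Qed.

Lemma enormE m (v : 'cV[R]_m) : enorm v = Num.sqrt (\sum_i v i ord0 ^+ 2).
Proof. by congr Num.sqrt; apply: eq_bigr => i _; rewrite big_ord1. Qed.

Lemma enorm_ge0 m (v : 'cV[R]_m) : 0 <= enorm v.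
Proof. exact: sqrtr_ge0. Qed.

Lemma enorm0 m : enorm (0 : 'cV[R]_m) = 0.
Proof. by rewrite enormE big1 ?sqrtr0 // => i _; rewrite mxE expr0n. Qed.

Lemma enormZ m (k : R) (v : 'cV[R]_m) : enorm (k *: v) = `|k| * enorm v.
Proof.
rewrite !enormE -sqrtr_sqr -sqrtrM ?sqr_ge0 // mulr_sumr.
by congr Num.sqrt; apply: eq_bigr => i _; rewrite mxE exprMn.
Qed.

Lemma enormN m (v : 'cV[R]_m) : enorm (- v) = enorm v.
Proof. by rewrite -scaleN1r enormZ normrN normr1 mul1r. Qed.

Lemma enormD m (u v : 'cV[R]_m) : enorm (u + v) <= enorm u + enorm v.
Proof.
rewrite !enormE.
set Su := \sum_i u i ord0 ^+ 2; set Sv := \sum_i v i ord0 ^+ 2.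
set Suv := \sum_i u i ord0 * v i ord0.
have Su0 : 0 <= Su by apply: sumr_ge0 => i _; exact: sqr_ge0.
have Sv0 : 0 <= Sv by apply: sumr_ge0 => i _; exact: sqr_ge0.
have -> : \sum_i (u + v) i ord0 ^+ 2 = Su + Sv + 2 * Suv.
  rewrite mulr_sumr -!big_split; apply: eq_bigr => i _ /=; rewrite mxE; ring.
have Suv_le : Suv <= Num.sqrt Su * Num.sqrt Sv.
  rewrite -sqrtrM //; apply: le_trans (ler_norm _) _.
  by rewrite -sqrtr_sqr ler_wsqrtr // cauchy_schwarz_sum.
rewrite -(ger0_norm (addr_ge0 (sqrtr_ge0 Su) (sqrtr_ge0 Sv))) -sqrtr_sqr.
by apply: ler_wsqrtr; rewrite sqrrD !sqr_sqrtr //; lra.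
Qed.

Lemma ler_coord_enorm m (v : 'cV[R]_m) i : `|v i ord0| <= enorm v.
Proof.
rewrite enormE -sqrtr_sqr; apply: ler_wsqrtr.
by rewrite (bigD1 i) //= lerDl; apply: sumr_ge0 => j _; exact: sqr_ge0.
Qed.

Lemma enorm_le_coordwise m (u v : 'cV[R]_m) :
  (forall i, `|u i ord0| <= `|v i ord0|) -> enorm u <= enorm v.
Proof.
move=> uv; rewrite !enormE; apply: ler_wsqrtr; apply: ler_sum => i _.
by rewrite -[u i ord0 ^+ 2]real_normK ?num_real // -[v i ord0 ^+ 2]real_normK ?num_real //
  lerXn2r ?nnegrE.
Qed.

Lemma enorm_mulmx_le_frob p q (A : 'M[R]_(p, q)) (v : 'cV[R]_q) :
  enorm (A *m v) <= frob A * enorm v.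
Proof.
rewrite !enormE /frob -sqrtrM; last first.
  by apply: sumr_ge0 => i _; apply: sumr_ge0 => j _; exact: sqr_ge0.
apply: ler_wsqrtr; rewrite mulr_suml; apply: ler_sum => i _.
by rewrite mxE; exact: cauchy_schwarz_sum.
Qed.

Lemma enorm_mulmx_le_specnorm p q (A : 'M[R]_(p, q)) (v : 'cV[R]_q) :
  enorm (A *m v) <= specnorm A * enorm v.
Proof.
set S := [set enorm (A *m u) | u in [set u : 'cV[R]_q | enorm u <= 1]].
have S_bounded : has_sup S.
  split; first by exists (enorm (A *m 0)); exists 0 => //=; rewrite enorm0.
  exists (frob A) => _ [u /= u_le1 <-].
  by apply: le_trans (enorm_mulmx_le_frob A u) _; rewrite ler_piMr ?sqrtr_ge0.
have [v0|v_neq0] := eqVneq (enorm v) 0.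
  by have := enorm_mulmx_le_frob A v; rewrite v0 !mulr0.
have v_gt0 : 0 < enorm v by rewrite lt_def v_neq0 enorm_ge0.
have inv_ge0 : 0 <= (enorm v)^-1 by rewrite invr_ge0 enorm_ge0.
have unit_in_S : S (enorm (A *m ((enorm v)^-1 *: v))).
  by exists ((enorm v)^-1 *: v) => //=; rewrite enormZ ger0_norm // mulVf.
have := sup_upper_bound S_bounded unit_in_S.
by rewrite -scalemxAr enormZ ger0_norm // ler_pdivrMl // mulrC.
Qed.

Lemma enorm_mulmx_le_perturbed p q (A A0 : 'M[R]_(p, q)) (v : 'cV[R]_q) :
  enorm (A *m v) <= (specnorm A0 + frob (A - A0)) * enorm v.
Proof.
rewrite -{1}(subrKC A0 A) mulmxDl mulrDl; apply: le_trans (enormD _ _) _.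
by rewrite lerD ?enorm_mulmx_le_specnorm ?enorm_mulmx_le_frob.
Qed.

Lemma frob_le_wdist p q L (W W0 : nat -> 'M[R]_(p, q)) k :
  (1 <= k <= L)%N -> frob (W k - W0 k) <= wdist L W W0.
Proof.
move=> /andP[k_ge1 k_leL]; apply: ler_wsqrtr.
rewrite (bigD1_seq k) ?iota_uniq ?mem_index_iota ?k_ge1 ?ltnS //= lerDl.
by apply: sumr_ge0 => l _; apply: sumr_ge0 => i _; apply: sumr_ge0 => j _; exact: sqr_ge0.
Qed.

Lemma enorm_mulmx_le_near p q L (W W0 : nat -> 'M[R]_(p, q)) (c r : R) k
    (v : 'cV[R]_q) :
  (1 <= k <= L)%N -> specnorm (W0 k) <= c -> wdist L W W0 <= r ->
  enorm (W k *m v) <= (c + r) * enorm v.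
Proof.
move=> kL W0_le dist_le; apply: le_trans (enorm_mulmx_le_perturbed _ (W0 k) v) _.
apply: ler_wpM2r; first exact: enorm_ge0.
by rewrite lerD // (le_trans (frob_le_wdist _ _ kL)).
Qed.

End EuclideanNorm.

Section LayerLipschitz.
Variables (R : realType) (n m : nat) (lam : R) (y : 'cV[R]_n).
Hypotheses (lam_gt0 : 0 < lam) (m_gt0 : (0 < m)%N).

Definition pair_dist (p q : 'cV[R]_m * 'cV[R]_m) : R :=
  Num.max (enorm (p.1 - q.1)) (enorm (p.2 - q.2)).

Lemma enorm_sigmav_lipschitz (a b : 'cV[R]_m) :
  enorm (sigmav lam a - sigmav lam b) <= enorm (a - b).
Proof. by apply: enorm_le_coordwise => i; rewrite !mxE sigma_lipschitz. Qed.

Lemma enorm_subr_sigmav_lipschitz (a b : 'cV[R]_m) :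
  enorm ((a - b) - (sigmav lam a - sigmav lam b)) <= enorm (a - b).
Proof. by apply: enorm_le_coordwise => i; rewrite !mxE subr_sigma_lipschitz. Qed.

Lemma layer_lipschitz (W1 : 'M[R]_(m, n)) (W2 : 'M[R]_m) (c : R) p q :
  0 <= c -> (forall v, enorm (W2 *m v) <= c * Num.sqrt m%:R * enorm v) ->
  pair_dist (layer W1 W2 y lam p) (layer W1 W2 y lam q)
    <= (2 * c + 1) * pair_dist p q.
Proof.
move=> c0 W2_le.
have sqrtm_gt0 : 0 < Num.sqrt (m%:R : R) by rewrite sqrtr_gt0 ltr0n.
set x := xlayer W1 W2 y; set P := x p.1 p.2 + p.2; set Q := x q.1 q.2 + q.2.
have dz_le : enorm (p.1 - q.1) <= pair_dist p q by rewrite le_max lexx.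
have du_le : enorm (p.2 - q.2) <= pair_dist p q by rewrite le_max lexx orbT.
have dx : x p.1 p.2 - x q.1 q.2 =
    (Num.sqrt m%:R)^-1 *: (W2 *m ((p.1 - q.1) - (p.2 - q.2))).
  rewrite /x /xlayer opprD addrACA subrr add0r -scalerBr -mulmxBr.
  by rewrite opprD addrACA -opprD.
have dx_le : enorm (x p.1 p.2 - x q.1 q.2) <= 2 * c * pair_dist p q.
  rewrite dx enormZ ger0_norm ?invr_ge0 ?sqrtr_ge0 // ler_pdivrMl //.
  apply: le_trans (W2_le _) _.
  rewrite [c * _]mulrC -!mulrA ler_pM2l // mulrCA; apply: ler_wpM2l => //.
  by apply: le_trans (enormD _ _) _; rewrite enormN; lra.
have dP_le : enorm (P - Q) <= (2 * c + 1) * pair_dist p q.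
  rewrite opprD addrACA mulrDl mul1r; apply: le_trans (enormD _ _) _.
  exact: lerD.
rewrite {1}/pair_dist /layer /= -/x -/P -/Q.
have -> : p.2 + x p.1 p.2 = P by rewrite addrC.
have -> : q.2 + x q.1 q.2 = Q by rewrite addrC.
rewrite opprD addrACA -opprD ge_max.
by rewrite !(le_trans _ dP_le) ?enorm_sigmav_lipschitz ?enorm_subr_sigmav_lipschitz.
Qed.

Lemma run_from_lipschitz (W1 : nat -> 'M[R]_(m, n)) (W2 : nat -> 'M[R]_m)
    (c : R) k :
  0 <= c -> forall l p q,
  (forall j, (l < j <= l + k)%N ->
     forall v, enorm (W2 j *m v) <= c * Num.sqrt m%:R * enorm v) ->
  pair_dist (run_from W1 W2 y lam l k p) (run_from W1 W2 y lam l k q)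
    <= (2 * c + 1) ^+ k * pair_dist p q.
Proof.
move=> c0; elim: k => [|k IHk] l p q W2_le /=; first by rewrite expr0 mul1r.
apply: le_trans (IHk _ _ _ _) _.
  by move=> j jk; apply: W2_le; lia.
rewrite exprSr -mulrA ler_wpM2l ?exprn_ge0 ?addr_ge0 ?mulr_ge0 //.
by apply: layer_lipschitz => //; apply: W2_le; lia.
Qed.

Lemma f_from_z_lipschitz L (W1 : nat -> 'M[R]_(m, n)) (W2 : nat -> 'M[R]_m)
    z0 u0 s l (c : R) (a b : 'cV[R]_m) :
  0 <= c ->
  (forall j, (1 <= j <= L)%N ->
     forall v, enorm (W2 j *m v) <= c * Num.sqrt m%:R * enorm v) ->
  `|f_from_z L W1 W2 y lam z0 u0 s l a - f_from_z L W1 W2 y lam z0 u0 s l b|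
    <= (Num.sqrt m%:R)^-1 * (2 * c + 1) ^+ (L - l) * enorm (a - b).
Proof.
move=> c0 W2_le; rewrite /f_from_z /=.
set w := _ + xlayer _ _ _ _ _.
have W2_le' j : (l < j <= l + (L - l))%N ->
    forall v, enorm (W2 j *m v) <= c * Num.sqrt m%:R * enorm v.
  by move=> lj; apply: W2_le; lia.
have := run_from_lipschitz W1 c0 (a, w - a) (b, w - b) W2_le'.
set pa := run_from _ _ _ _ _ _ _; set pb := run_from _ _ _ _ _ _ _.
have -> : pair_dist (a, w - a) (b, w - b) = enorm (a - b).
  rewrite /pair_dist /=.
  have -> : w - a - (w - b) = - (a - b) by rewrite opprB addrC addrA subrK opprB.
  by rewrite enormN maxxx.
move=> run_le.
rewrite !mxE -mulrBr normrM ger0_norm ?invr_ge0 ?sqrtr_ge0 // -mulrA.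
rewrite ler_wpM2l ?invr_ge0 ?sqrtr_ge0 //; apply: le_trans run_le.
have := ler_coord_enorm (pa.1 - pb.1) s; rewrite !mxE => /le_trans; apply.
by rewrite le_max lexx.
Qed.

End LayerLipschitz.

Section GradientBound.
Variables (R : realType) (m : nat).

Lemma norm_derive_le_lipschitz (f : 'cV[R]_m -> R) (a v : 'cV[R]_m) (K : R) :
  differentiable f a -> (forall w, `|f w - f a| <= K * enorm (w - a)) ->
  `|'D_v f a| <= K * enorm v.
Proof.
move=> df f_lip.
have quot_cvg : (fun h : R => h^-1 *: ((f \o shift a) (h *: v) - f a)) @ 0^'
    --> 'D_v f a := diff_derivable (v := v) df.
have quot_le : \forall h \near 0^',
    `|h^-1 *: ((f \o shift a) (h *: v) - f a)| <= K * enorm v.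
  near=> h.
  have h_neq0 : h != 0 by near: h; exact: nbhs_dnbhs_neq.
  rewrite /= normrZ normfV ler_pdivrMl ?normr_gt0 // mulrCA -enormZ.
  by have := f_lip (h *: v + a); rewrite addrK.
rewrite ler_norml; apply/andP; split.
  apply: (closed_cvg _ (@closed_ge _ _) _ _ quot_cvg).
  by apply: filterS quot_le => h; rewrite ler_norml => /andP[].
apply: (closed_cvg _ (@closed_le _ _) _ _ quot_cvg).
by apply: filterS quot_le => h; rewrite ler_norml => /andP[].
Unshelve. all: by end_near.
Qed.

(* The gradient b is the direction in which 'D_b f a = |b|^2, so the
   Lipschitz bound |'D_b f a| <= K |b| gives |b| <= K. *)
Lemma enorm_gradient_le (f : 'cV[R]_m -> R) (a : 'cV[R]_m) (K : R) :
  0 <= K -> differentiable f a ->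
  (forall w, `|f w - f a| <= K * enorm (w - a)) ->
  enorm (\col_j 'D_(delta_mx j ord0 : 'cV[R]_m) f a) <= K.
Proof.
move=> K0 df f_lip; set b := \col_j _.
have Db : 'D_b f a = enorm b ^+ 2.
  rewrite enormE sqr_sqrtr ?sumr_ge0 // => [|i _]; last exact: sqr_ge0.
  rewrite deriveE // {1}(matrix_sum_delta b) linear_sum /=.
  apply: eq_bigr => i _; rewrite big_ord1 linearZ /= expr2; congr (_ * _).
  by rewrite mxE deriveE.
have := norm_derive_le_lipschitz b df f_lip.
rewrite Db ger0_norm ?sqr_ge0 // expr2.
have [->|b_neq0] := eqVneq (enorm b) 0; first by [].
by rewrite ler_pM2r // lt_def b_neq0 enorm_ge0.
Qed.

End GradientBound.

Section Differentiability.
Variables (R : realType) (n m : nat) (lam : R) (y : 'cV[R]_n).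

Definition coordwise_differentiable (G : 'cV[R]_m -> 'cV[R]_m * 'cV[R]_m)
    (a : 'cV[R]_m) :=
  forall i j, differentiable (fun x => (G x).1 i j) a /\
              differentiable (fun x => (G x).2 i j) a.

Lemma differentiable_sigma_comp (g : 'cV[R]_m -> R) a :
  differentiable g a -> differentiable (fun x => sigma lam (g x)) a.
Proof.
move=> dg; apply: (differentiable_comp (g := sigma lam)) => //.
exact: differentiable_sigma.
Qed.

Lemma layer_coordwise_differentiable (W1 : 'M[R]_(m, n)) (W2 : 'M[R]_m) G a :
  coordwise_differentiable G a ->
  coordwise_differentiable (fun x => layer W1 W2 y lam (G x)) a.
Proof.
move=> dG i j.
pose X x := (xlayer W1 W2 y (G x).1 (G x).2) i j.
have dX : differentiable X a.
  have -> : X =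
      cst (((Num.sqrt n%:R)^-1 *: (W1 *m y)) i j) + cst (Num.sqrt m%:R)^-1 *
        \sum_k (cst (W2 i k) * (fun x => (G x).1 k j - (G x).2 k j)).
    apply/funext => x; rewrite /X fct_sumE /xlayer /= !mxE; congr (_ + _ * _).
    by apply: eq_bigr => k _; rewrite !mxE.
  apply: differentiableD => //; apply: differentiableM => //.
  apply: differentiable_sum => k; apply: differentiableM => //.
  by apply: differentiableB; [exact: (dG k j).1 | exact: (dG k j).2].
pose U x := (G x).2 i j.
have dU : differentiable U a by exact: (dG i j).2.
split.
  have -> : (fun x => (layer W1 W2 y lam (G x)).1 i j) =
      (fun x => sigma lam (X x + U x)) by apply/funext => x; rewrite /X /U !mxE.
  exact/differentiable_sigma_comp/differentiableD.
have -> : (fun x => (layer W1 W2 y lam (G x)).2 i j) =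
    (fun x => U x + X x - sigma lam (X x + U x)) by apply/funext => x; rewrite /X /U !mxE.
apply: differentiableB; first exact: differentiableD.
exact/differentiable_sigma_comp/differentiableD.
Qed.

Lemma run_from_coordwise_differentiable (W1 : nat -> 'M[R]_(m, n))
    (W2 : nat -> 'M[R]_m) k a : forall l G,
  coordwise_differentiable G a ->
  coordwise_differentiable (fun x => run_from W1 W2 y lam l k (G x)) a.
Proof.
elim: k => [|k IHk] l G dG //=.
exact/IHk/layer_coordwise_differentiable.
Qed.

Lemma differentiable_f_from_z L (W1 : nat -> 'M[R]_(m, n)) (W2 : nat -> 'M[R]_m)
    z0 u0 s l a :
  differentiable (f_from_z L W1 W2 y lam z0 u0 s l) a.
Proof.
rewrite /f_from_z /=; set w := _ + xlayer _ _ _ _ _.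
pose run x := run_from W1 W2 y lam l (L - l) (x, w - x).
have dG : coordwise_differentiable (fun x => (x, w - x)) a.
  move=> i j /=; split; first exact: differentiable_coord.
  have -> : (fun x : 'cV[R]_m => (w - x) i j) = (fun x => w i j - x i j).
    by apply/funext => x; rewrite !mxE.
  by apply: differentiableB => //; exact: differentiable_coord.
have [drun _] := run_from_coordwise_differentiable W1 W2 (L - l) l dG s ord0.
have -> : (fun x => ((Num.sqrt m%:R)^-1 *: (run x).1) s ord0) =
    (fun x => (Num.sqrt m%:R)^-1 * (run x).1 s ord0).
  by apply/funext => x; rewrite mxE.
exact: differentiableM.
Qed.

End Differentiability.

Lemma enorm_bvec_le (R : realType) n m L (lam c : R) (W1 : nat -> 'M[R]_(m, n))
    (W2 : nat -> 'M[R]_m) y z0 u0 s l :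
  0 < lam -> (0 < m)%N -> 0 <= c ->
  (forall j, (1 <= j <= L)%N ->
     forall v, enorm (W2 j *m v) <= c * Num.sqrt m%:R * enorm v) ->
  enorm (bvec L W1 W2 y lam z0 u0 s l) <= (2 * c + 1) ^+ (L - l).
Proof.
move=> lam_gt0 m_gt0 c0 W2_le.
have sqrtm_ge1 : 1 <= Num.sqrt (m%:R : R) by rewrite -{1}sqrtr1 ler_wsqrtr // ler1n.
have sqrtm_gt0 : 0 < Num.sqrt (m%:R : R) := lt_le_trans ltr01 sqrtm_ge1.
have rate_ge0 : 0 <= (2 * c + 1) ^+ (L - l) by rewrite exprn_ge0 ?addr_ge0 ?mulr_ge0.
apply: (@le_trans _ _ ((Num.sqrt m%:R)^-1 * (2 * c + 1) ^+ (L - l))).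
  apply: enorm_gradient_le; first by rewrite mulr_ge0 // invr_ge0 sqrtr_ge0.
    exact: differentiable_f_from_z.
  by move=> w; exact: f_from_z_lipschitz.
by rewrite ler_piMl // invr_le1 ?unitfE ?gt_eqF.
Qed.

Theorem lemma10 (R : realType) (n m L : nat) (lam Lsig : R)
  (hn : (0 < n)%N) (hm : (0 < m)%N) (hL : (0 < L)%N) (hlam : 0 < lam)
  (hLsig : forall x : R, `|derive1 (sigma lam) x| <= Lsig)
  (y : 'cV[R]_n) (z0 u0 : 'cV[R]_m)
  (W10 : nat -> 'M[R]_(m, n)) (W20 : nat -> 'M[R]_m)
  (hW20 : forall l : nat, (1 <= l <= L)%N ->
     specnorm (W20 l) <= 3 * Num.sqrt m%:R) :
  (forall (R1 R2 : R) (W1 : nat -> 'M[R]_(m, n)) (W2 : nat -> 'M[R]_m),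
     wdist L W1 W10 <= R1 -> wdist L W2 W20 <= R2 ->
     forall (s : 'I_m) (l : nat), (1 <= l <= L)%N ->
       enorm (bvec L W1 W2 y lam z0 u0 s l)
         <= Lsig ^+ (L - l) * (2 * (3 + R2 / Num.sqrt m%:R) + 1) ^+ (L - l))
  /\
  (forall (s : 'I_m) (l : nat), (1 <= l <= L)%N ->
     enorm (bvec L W10 W20 y lam z0 u0 s l)
       <= Lsig ^+ (L - l) * (2 * 3 + 1) ^+ (L - l)).
Proof.
have Lsig_ge1 := sigma_derive_bound_ge1 hLsig.
have sqrtm_gt0 : 0 < Num.sqrt (m%:R : R) by rewrite sqrtr_gt0 ltr0n.
have bound (R2 : R) (W1 : nat -> 'M[R]_(m, n)) (W2 : nat -> 'M[R]_m) s l :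
    wdist L W2 W20 <= R2 ->
    enorm (bvec L W1 W2 y lam z0 u0 s l)
      <= Lsig ^+ (L - l) * (2 * (3 + R2 / Num.sqrt m%:R) + 1) ^+ (L - l).
  move=> dist_le; set c := 3 + R2 / Num.sqrt m%:R.
  have R2_ge0 : 0 <= R2 := le_trans (sqrtr_ge0 _) dist_le.
  have c_ge0 : 0 <= c by rewrite /c addr_ge0 ?ler0n ?divr_ge0 ?sqrtr_ge0.
  have W2_le j : (1 <= j <= L)%N ->
      forall v, enorm (W2 j *m v) <= c * Num.sqrt m%:R * enorm v.
    move=> jL v; rewrite mulrDl divfK ?gt_eqF //.
    exact: enorm_mulmx_le_near (hW20 j jL) dist_le.
  apply: le_trans (enorm_bvec_le W1 y z0 u0 s l hlam hm c_ge0 W2_le) _.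
  by rewrite ler_peMl ?exprn_ege1 ?exprn_ge0 ?addr_ge0 ?mulr_ge0.
split=> [R1 R2 W1 W2 _ dist_le s l _ | s l _]; first exact: bound.
have dist0 : wdist L W20 W20 <= 0.
  rewrite /wdist big1 ?sqrtr0 // => k _.
  by rewrite big1 // => i _; rewrite big1 // => j _; rewrite subrr mxE expr0n.
by have := bound 0 W10 W20 s l dist0; rewrite mul0r addr0.
Qed.
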